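(* Let $M_1,M_2$ be connected Bowditch boundaries of relatively hyperbolic pairs $(G_1,\mathbb{P}_1)$ and $(G_2,\mathbb{P}_2)$, and let $T(M_i)$ denote the exact cut pair/cut point tree of $M_i$. Each homeomorphism $f\colon M_1\to M_2$ induces a graph isomorphism $\hat f\colon T(M_1)\to T(M_2)$. Moreover, if $M_3$ is also such a boundary and $f_i\colon M_i\to M_{i+1}$ ($i=1,2$) are homeomorphisms, then $\widehat{f_2f_1}=\hat f_2\hat f_1$, and $\widehat{\mathrm{id}}=\mathrm{id}$.
   Context: Relatively hyperbolic pair $(G,\mathbb{P})$: $G$ finitely generated, $\mathbb{P}$ a finite family of finitely generated subgroups, such that the cusped space (Cayley graph of $G$ with respect to a finite generating set containing generators of each $P$, with a warped-product horoball $\Gamma_{gP}\times_{e^{-t}}[0,\infty)$ attached along each coset subgraph $\Gamma_{gP}$) is Gromov hyperbolic; its Gromov boundary is the Bowditch boundary $\partial(G,\mathbb{P})$. For a compact connected locally connected metrizable space $M$: a cut point is $\eta$ with $M\setminus\{\eta\}$ disconnected. A cut pair is a set of two distinct non-cut points $\{\zeta,\xi\}$ with $M\setminus\{\zeta,\xi\}$ disconnected. For a non-cut point $\zeta$, its valence is the number of ends of $M\setminus\{\zeta\}$. A cut pair $\{\zeta,\xi\}$ is exact if both points have valence equal to the number of components of $M\setminus\{\zeta,\xi\}$; it is inseparable if no other exact cut pair $\{a,b\}$ has $\zeta,\xi$ in distinct components of $M\setminus\{a,b\}$. Let $Z$ be the set of all cut points and inseparable exact cut pairs. Two points of $M\setminus\bigcup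 Z$ are equivalent if no element of $Z$ separates them; a piece is the closure of an equivalence class with at least two points, and $\Pi$ is the set of pieces. $T(M)$ is the bipartite graph with vertex set $Z\sqcup\Pi$, where $z\in Z$ and $\pi\in\Pi$ are adjacent iff $z\subseteq\pi$. *)

From Stdlib Require Import Reals.
From mathcomp Require Import all_boot all_order all_algebra.
From mathcomp Require Import all_classical all_reals all_analysis.
From mathcomp Require Import Rstruct.
Import Num.Theory.
Set Implicit Arguments. Unset Strict Implicit. Unset Printing Implicit Defensive.
Local Open Scope classical_set_scope.

Definition metrizable (T : topologicalType) : Prop :=
  exists d : T -> T -> R,
    (forall x y, d x y = d y x) /\
    (forall x y, (d x y = 0)%R <-> x = y) /\
    (forall x y z, (d x z <= d x y + d y z)%R) /\
    (forall (x : T) (A : set T),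
        nbhs x A <-> exists e : R, (0 < e)%R /\ [set y | (d x y < e)%R] `<=` A).

Definition locally_connected (T : topologicalType) : Prop :=
  forall (x : T) (U : set T), nbhs x U ->
    exists V : set T, [/\ open V, V x, connected V & V `<=` U].

Definition ccllm_space (T : topologicalType) : Prop :=
  [/\ compact [set: T], connected [set: T], locally_connected T & metrizable T].

Section TreeDefs.
Variable T : topologicalType.

Definition components (A : set T) : set (set T) :=
  [set connected_component A x | x in A].

(* Freudenthal ends of the subspace X: compatible choices, for every compact
   K contained in X, of a component of X \ K whose closure in X is not compact
   (normalized to set0 on all other arguments). *)
Definition ends (X : set T) : set (set T -> set T) :=
  [set e | (forall K, ~ (compact K /\ K `<=` X) -> e K = set0) /\
           (forall K, compact K -> K `<=` X ->
              components (X `\` K) (e K) /\ ~ compact (closure (e K) `&` X)) /\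
           (forall K K', compact K -> compact K' -> K `<=` K' -> K' `<=` X ->
              e K' `<=` e K)].

Definition cut_point (eta : T) : Prop := ~ connected (~` [set eta]).

Definition cut_pair (zeta xi : T) : Prop :=
  [/\ zeta <> xi, ~ cut_point zeta, ~ cut_point xi &
      ~ connected (~` [set zeta; xi])].

(* valence of zeta = number (cardinal) of ends of M \ {zeta};
   exactness compares it with the number of components of M \ {zeta, xi} *)
Definition exact_cut_pair (zeta xi : T) : Prop :=
  [/\ cut_pair zeta xi,
      card_eq (ends (~` [set zeta])) (components (~` [set zeta; xi])) &
      card_eq (ends (~` [set xi])) (components (~` [set zeta; xi]))].

Definition separated_by (S : set T) (x y : T) : Prop :=
  (~` S) x /\ (~` S) y /\ connected_component (~` S) x <> connected_component (~` S) y.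

Definition inseparable_exact_cut_pair (zeta xi : T) : Prop :=
  exact_cut_pair zeta xi /\
  ~ exists a b : T, [/\ exact_cut_pair a b, [set a; b] <> [set zeta; xi] &
                       separated_by [set a; b] zeta xi].

Definition Zset : set (set T) :=
  [set [set eta] | eta in cut_point] `|`
  [set S | exists zeta xi, inseparable_exact_cut_pair zeta xi /\ S = [set zeta; xi]].

Definition unionZ : set T := \bigcup_(z in Zset) z.

Definition equivZ (x y : T) : Prop :=
  (~` unionZ) x /\ (~` unionZ) y /\ forall z, Zset z -> ~ separated_by z x y.

Definition eqclass (x : T) : set T := [set y | equivZ x y].

Definition Piset : set (set T) :=
  [set P | exists x, (~` unionZ) x /\
     (exists y z, eqclass x y /\ eqclass x z /\ y <> z) /\ P = closure (eqclass x)].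

(* the bipartite graph T(M): vertex set Z ⊔ Π *)
Definition tree_vertex (v : set T + set T) : Prop :=
  match v with inl z => Zset z | inr p => Piset p end.

Definition tree_adj (v w : set T + set T) : Prop :=
  match v, w with
  | inl z, inr p => z `<=` p
  | inr p, inl z => z `<=` p
  | _, _ => False
  end.

End TreeDefs.

Definition homeomorphism (T1 T2 : topologicalType) (f : T1 -> T2) : Prop :=
  exists g : T2 -> T1, [/\ cancel f g, cancel g f, continuous f & continuous g].

Definition hat (T1 T2 : topologicalType) (f : T1 -> T2)
    (v : set T1 + set T1) : set T2 + set T2 :=
  match v with inl z => inl (f @` z) | inr p => inr (f @` p) end.

Definition tree_iso (T1 T2 : topologicalType) (F : set T1 + set T1 -> set T2 + set T2)
  : Prop :=
  set_bij (@tree_vertex T1) (@tree_vertex T2) F /\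
  forall v w, tree_vertex v -> tree_vertex w -> (tree_adj v w <-> tree_adj (F v) (F w)).

From mathcomp Require Import all_boot all_classical all_reals all_analysis.
Local Open Scope classical_set_scope.
Set Implicit Arguments.
Unset Strict Implicit.

(* Every ingredient of T(M) -- connectedness, compactness, closures, connected
   components and Freudenthal ends -- is topological, so a homeomorphism f with
   inverse g transports all of it: f maps the components of X onto those of
   f(X), and the conjugation e |-> (K |-> f(e(g(K)))) maps the ends of X
   bijectively onto those of f(X). Hence f preserves cut points, valences,
   exact and inseparable cut pairs, separation and pieces, so A |-> f(A) maps
   the vertices of T(M1) onto those of T(M2), with inverse A |-> g(A), and
   preserves inclusion, i.e. adjacency. Functoriality is just
   (f2 o f1)(A) = f2(f1(A)). None of this uses that the spaces are compact,
   connected, locally connected or metrizable. *)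

Section ImageBijection.
Variables (T1 T2 : Type) (f : T1 -> T2) (g : T2 -> T1).
Hypotheses (fK : cancel f g) (gK : cancel g f).

Lemma imageK (A : set T1) : g @` (f @` A) = A.
Proof. by rewrite image_comp; apply: eq_image_id => x _ /=; rewrite fK. Qed.

Lemma can_eq (x y : T1) : (f x = f y) = (x = y).
Proof. by rewrite propeqE; split=> [/(can_inj fK)|->]. Qed.

Lemma can_image_eq (A B : set T1) : (f @` A = f @` B) = (A = B).
Proof.
by rewrite propeqE; split=> [fAB|-> //]; rewrite -(imageK A) fAB imageK.
Qed.

Lemma can_image_subset (A B : set T1) : (f @` A `<=` f @` B) = (A `<=` B).
Proof.
rewrite propeqE; split=> [/(image_subset g)|]; last exact: image_subset.
by rewrite !imageK.
Qed.

Lemma can_exists (P : T2 -> Prop) : (exists y, P y) = (exists x, P (f x)).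
Proof.
rewrite propeqE; split=> [[y Py]|[x Pfx]]; last by exists (f x).
by exists (g y); rewrite gK.
Qed.

Lemma image_can_preimage (A : set T1) : f @` A = g @^-1` A.
Proof.
apply/seteqP; split=> [_ [x Ax <-]|y Agy]; first by rewrite /preimage /= fK.
by exists (g y); rewrite ?gK.
Qed.

Lemma image_setC (A : set T1) : f @` (~` A) = ~` (f @` A).
Proof. by rewrite !image_can_preimage preimage_setC. Qed.

Lemma image_setI (A B : set T1) : f @` (A `&` B) = f @` A `&` f @` B.
Proof. by rewrite !image_can_preimage preimage_setI. Qed.

Lemma image_setD (A B : set T1) : f @` (A `\` B) = f @` A `\` f @` B.
Proof. by rewrite !setDE image_setI image_setC. Qed.

End ImageBijection.

Lemma image_set2 (T1 T2 : Type) (f : T1 -> T2) (a b : T1) :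
  f @` [set a; b] = [set f a; f b].
Proof. by rewrite image_setU !image_set1. Qed.

Section ContinuousImage.
Variables (T1 T2 : topologicalType) (f : T1 -> T2).
Hypothesis fcont : continuous f.

Lemma connected_image (A : set T1) : connected A -> connected (f @` A).
Proof.
move=> cA; apply: connected_continuous_connected => //.
exact: continuous_subspaceT.
Qed.

Lemma compact_image (A : set T1) : compact A -> compact (f @` A).
Proof. by apply: continuous_compact; exact: continuous_subspaceT. Qed.

Lemma image_closure_sub (A : set T1) : f @` closure A `<=` closure (f @` A).
Proof.
move=> _ [x clAx <-] B /fcont /clAx [a [Aa Ba]].
by exists (f a); split=> //; exists a.
Qed.

Lemma image_connected_component_sub (A : set T1) (x : T1) :
  f @` connected_component A x `<=` connected_component (f @` A) (f x).
Proof.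
move=> _ [y [C [Cx CA cC] Cy] <-]; exists (f @` C); last by exists y.
by split; [exists x | exact: image_subset | exact: connected_image].
Qed.

End ContinuousImage.

Record homeo_pair {T1 T2 : topologicalType} (f : T1 -> T2) (g : T2 -> T1) :
    Prop :=
  HomeoPair {
    homeo_cancel : cancel f g;
    homeo_inv_cancel : cancel g f;
    homeo_cont : continuous f;
    homeo_inv_cont : continuous g }.

Lemma homeo_pair_sym (T1 T2 : topologicalType) (f : T1 -> T2) (g : T2 -> T1) :
  homeo_pair f g -> homeo_pair g f.
Proof. by case=> *; split. Qed.

Definition end_image (T1 T2 : Type) (f : T1 -> T2) (g : T2 -> T1)
  (e : set T1 -> set T1) : set T2 -> set T2 := fun K => f @` e (g @` K).

Lemma end_imageK (T1 T2 : Type) (f : T1 -> T2) (g : T2 -> T1) :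
  cancel f g -> cancel (end_image f g) (end_image g f).
Proof. by move=> fK e; apply: funext => K; rewrite /end_image !imageK. Qed.

Section HomeoImage.
Variables (T1 T2 : topologicalType) (f : T1 -> T2) (g : T2 -> T1).
Hypothesis fg : homeo_pair f g.
Let fK := homeo_cancel fg.
Let gK := homeo_inv_cancel fg.
Let fcont := homeo_cont fg.
Let gcont := homeo_inv_cont fg.
Let finj : injective f := can_inj fK.

Lemma connected_imageE (A : set T1) : connected (f @` A) = connected A.
Proof.
rewrite propeqE; split=> [/(connected_image gcont)|/(connected_image fcont)//].
by rewrite imageK.
Qed.

Lemma compact_imageE (A : set T1) : compact (f @` A) = compact A.
Proof.
rewrite propeqE; split=> [/(compact_image gcont)|/(compact_image fcont)//].
by rewrite imageK.
Qed.

Lemma closure_image (A : set T1) : f @` closure A = closure (f @` A).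
Proof.
apply/seteqP; split; first exact: image_closure_sub.
have /(image_subset f) := image_closure_sub gcont (A := f @` A).
by rewrite (imageK gK) (imageK fK).
Qed.

Lemma connected_component_image (A : set T1) (x : T1) :
  f @` connected_component A x = connected_component (f @` A) (f x).
Proof.
apply/seteqP; split; first exact: image_connected_component_sub.
have /(image_subset f) :=
  image_connected_component_sub gcont (A := f @` A) (x := f x).
by rewrite (imageK gK) (imageK fK) fK.
Qed.

Lemma components_image (A : set T1) :
  components (f @` A) = [set f @` C | C in components A].
Proof.
apply/seteqP; split=> [_ [_ [x Ax <-] <-]|_ [_ [x Ax <-] <-]].
  exists (connected_component A x); first by exists x.
  by rewrite connected_component_image.
by rewrite connected_component_image; exists (f x) => //; exists x.
Qed.

Lemma components_imageE (A C : set T1) :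
  components (f @` A) (f @` C) = components A C.
Proof.
by rewrite components_image image_inj // => C1 C2; rewrite (can_image_eq fK).
Qed.

Lemma card_components_image (A : set T1) :
  card_eq (components (f @` A)) (components A).
Proof.
rewrite components_image; apply: inj_card_eq; apply: in2W => C1 C2.
by rewrite (can_image_eq fK).
Qed.

Lemma separated_by_image (S : set T1) (x y : T1) :
  separated_by (f @` S) (f x) (f y) = separated_by S x y.
Proof.
rewrite /separated_by -(image_setC fK gK) -!connected_component_image.
by rewrite !(image_inj finj) (can_image_eq fK).
Qed.

Lemma cut_point_image (eta : T1) : cut_point (f eta) = cut_point eta.
Proof.
by rewrite /cut_point -image_set1 -(image_setC fK gK) connected_imageE.
Qed.

Lemma cut_pair_image (zeta xi : T1) : cut_pair (f zeta) (f xi) = cut_pair zeta xi.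
Proof.
rewrite /cut_pair !cut_point_image -image_set2 -(image_setC fK gK).
by rewrite connected_imageE (can_eq fK).
Qed.

Lemma ends_end_image (X : set T1) (e : set T1 -> set T1) :
  ends X e -> ends (f @` X) (end_image f g e).
Proof.
case=> e0 [ecomp emono]; split; [|split].
- move=> K nK; rewrite /end_image e0 ?image_set0 //.
  by rewrite -compact_imageE -(can_image_subset fK) (imageK gK).
- move=> K; rewrite -(imageK gK K) compact_imageE (can_image_subset fK).
  rewrite /end_image (imageK fK); move: (g @` K) => {}K cK KX.
  rewrite -(image_setD fK gK) components_imageE -closure_image.
  by rewrite -(image_setI fK gK) compact_imageE; exact: ecomp.
- move=> K K'; rewrite -(imageK gK K) -(imageK gK K') !compact_imageE.
  rewrite !(can_image_subset fK) /end_image !(imageK fK).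
  by move: (g @` K) (g @` K') => {}K {}K'; exact: emono.
Qed.

End HomeoImage.

Lemma hat_comp (T1 T2 T3 : topologicalType) (f1 : T1 -> T2) (f2 : T2 -> T3) :
  hat (f2 \o f1) =1 hat f2 \o hat f1.
Proof. by case=> A /=; rewrite image_comp. Qed.

Lemma hat_id (T : topologicalType) : hat (@id T) =1 id.
Proof. by case=> A /=; rewrite image_id. Qed.

Section HatCancel.
Variables (T1 T2 : topologicalType) (f : T1 -> T2) (g : T2 -> T1).
Hypothesis fK : cancel f g.

Lemma hatK : cancel (hat f) (hat g).
Proof. by case=> A /=; rewrite imageK. Qed.

Lemma tree_adj_hat (v w : set T1 + set T1) :
  tree_adj (hat f v) (hat f w) = tree_adj v w.
Proof. by case: v w => [A|A] [B|B] //=; rewrite (can_image_subset fK). Qed.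

End HatCancel.

Section HomeoTree.
Variables (T1 T2 : topologicalType) (f : T1 -> T2) (g : T2 -> T1).
Hypothesis fg : homeo_pair f g.
Let fK := homeo_cancel fg.
Let gK := homeo_inv_cancel fg.
Let finj : injective f := can_inj fK.

Lemma ends_image (X : set T1) :
  ends (f @` X) = [set end_image f g e | e in ends X].
Proof.
apply/seteqP; split=> [e' Xe'|_ [e Xe <-]]; last exact: ends_end_image.
exists (end_image g f e'); last exact: (end_imageK gK e').
by have := ends_end_image (homeo_pair_sym fg) Xe'; rewrite (imageK fK).
Qed.

Lemma card_ends_image (X : set T1) : card_eq (ends (f @` X)) (ends X).
Proof.
rewrite ends_image; apply: inj_card_eq; apply: in2W.
exact: can_inj (end_imageK fK).
Qed.

Lemma exact_cut_pair_image (zeta xi : T1) :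
  exact_cut_pair (f zeta) (f xi) = exact_cut_pair zeta xi.
Proof.
have valence_image (X Y : set T1) :
    card_eq (ends (f @` X)) (components (f @` Y)) =
    card_eq (ends X) (components Y).
  have [endsX compY] := (card_ends_image X, card_components_image fg Y).
  apply/idP/idP => XY.
    exact: card_eq_trans (card_esym endsX) (card_eq_trans XY compY).
  exact: card_eq_trans endsX (card_eq_trans XY (card_esym compY)).
rewrite /exact_cut_pair (cut_pair_image fg) -image_set2 -!image_set1.
by rewrite -!(image_setC fK gK) !valence_image.
Qed.

Lemma inseparable_exact_cut_pair_image (zeta xi : T1) :
  inseparable_exact_cut_pair (f zeta) (f xi) = inseparable_exact_cut_pair zeta xi.
Proof.
rewrite /inseparable_exact_cut_pair exact_cut_pair_image (can_exists gK).
under eq_exists => a do rewrite (can_exists gK).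
by under eq_exists => a do under eq_exists => b do
  rewrite exact_cut_pair_image -!image_set2 (can_image_eq fK)
    (separated_by_image fg).
Qed.

Lemma Zset_image (z : set T1) : Zset (f @` z) = Zset z.
Proof.
rewrite /Zset /= !exists2E; congr (_ \/ _).
  rewrite (can_exists gK).
  by under eq_exists => eta do
    rewrite (cut_point_image fg) -image_set1 (can_image_eq fK).
rewrite (can_exists gK); under eq_exists => zeta do rewrite (can_exists gK).
by under eq_exists => zeta do under eq_exists => xi do
  rewrite inseparable_exact_cut_pair_image -image_set2 (can_image_eq fK).
Qed.

Lemma unionZ_image (x : T1) : unionZ (f x) = unionZ x.
Proof.
rewrite propeqE /unionZ; split=> -[w]; last first.
  by move=> Zw wx; exists (f @` w); rewrite ?Zset_image ?(image_inj finj).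
rewrite -[w](imageK gK); move: (g @` w) => {}w.
by rewrite Zset_image (image_inj finj) => Zw wx; exists w.
Qed.

Lemma equivZ_image (x y : T1) : equivZ (f x) (f y) = equivZ x y.
Proof.
rewrite /equivZ /setC /= !unionZ_image propeqE.
split=> -[nx [ny sep]]; do 2!split=> //.
  move=> w Zw; rewrite -(separated_by_image fg).
  by apply: sep; rewrite Zset_image.
move=> w; rewrite -[w](imageK gK) Zset_image (separated_by_image fg).
exact: sep.
Qed.

Lemma eqclass_image (x : T1) : f @` eqclass x = eqclass (f x).
Proof.
apply/seteqP; split=> [_ [y xy <-]|y]; first by rewrite /eqclass /= equivZ_image.
by rewrite -[y]gK (image_inj finj) /eqclass /= equivZ_image.
Qed.

Lemma Piset_image (P : set T1) : Piset (f @` P) = Piset P.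
Proof.
have nontrivial (E : set T1) :
    (exists y z, (f @` E) y /\ (f @` E) z /\ y <> z) =
    (exists y z, E y /\ E z /\ y <> z).
  rewrite (can_exists gK); under eq_exists => y do rewrite (can_exists gK).
  by under eq_exists => y do under eq_exists => z do
    rewrite !(image_inj finj) (can_eq fK).
rewrite /Piset /= (can_exists gK).
by under eq_exists => x do rewrite /setC /= unionZ_image -eqclass_image nontrivial
  -(closure_image fg) (can_image_eq fK).
Qed.

Lemma tree_vertex_hat (v : set T1 + set T1) :
  tree_vertex (hat f v) = tree_vertex v.
Proof. by case: v => A /=; rewrite ?Zset_image ?Piset_image. Qed.

Lemma tree_iso_hat : tree_iso (hat f).
Proof.
split; first split.
- by move=> v; rewrite /= tree_vertex_hat.
- by move=> v w _ _ /(can_inj (hatK fK)).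
- move=> w Vw; exists (hat g w); last exact: (hatK gK w).
  by rewrite -tree_vertex_hat (hatK gK).
- by move=> v w _ _; rewrite (tree_adj_hat fK).
Qed.

End HomeoTree.

Theorem corollary1p2 :
  (forall (T1 T2 : topologicalType) (f : T1 -> T2),
      ccllm_space T1 -> ccllm_space T2 -> homeomorphism f ->
      tree_iso (hat f)) /\
  (forall (T1 T2 T3 : topologicalType) (f1 : T1 -> T2) (f2 : T2 -> T3),
      ccllm_space T1 -> ccllm_space T2 -> ccllm_space T3 ->
      homeomorphism f1 -> homeomorphism f2 ->
      forall v, tree_vertex v -> hat (f2 \o f1) v = hat f2 (hat f1 v)) /\
  (forall T : topologicalType, ccllm_space T ->
      forall v, tree_vertex v -> hat (@id T) v = v).
Proof.
split; [|split].
- move=> T1 T2 f _ _ [g [fK gK fcont gcont]].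
  exact: tree_iso_hat (HomeoPair fK gK fcont gcont).
- by move=> T1 T2 T3 f1 f2 _ _ _ _ _ v _; exact: hat_comp.
- by move=> T _ v _; exact: hat_id.
Qed.
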